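(* Let $\theta\in\mathcal X:=\prod_{s\in\mathcal S}\Delta(\mathcal A)$ and $\pi_\theta(a|s)=\theta_{s,a}$, and assume $d^{\pi_\theta,\hat P^{\pi_\theta}}(s)>0$ for all $s$. Define $G(\theta)\in\mathbb R^{\mathcal S\times\mathcal A}$ by $[G(\theta)]_{s,a}=\frac{1}{1-\gamma}d^{\pi_\theta,\hat P^{\pi_\theta}}(s)Q^{\pi_\theta}(s,a)$. Then $$\mathbb E_{s_0\sim\rho}\big(V^\star(s_0)-V^{\pi_\theta}(s_0)\big)\le\Big\|\frac{d^{\pi^\star,\hat P^{\pi_\theta}}}{d^{\pi_\theta,\hat P^{\pi_\theta}}}\Big\|_\infty\max_{\bar\pi\in\mathcal X}\langle\bar\pi-\pi_\theta,G(\theta)\rangle,$$ where $\big\|\frac{d^{\pi^\star,\hat P^{\pi_\theta}}}{d^{\pi_\theta,\hat P^{\pi_\theta}}}\big\|_\infty:=\max_s\frac{d^{\pi^\star,\hat P^{\pi_\theta}}(s)}{d^{\pi_\theta,\hat P^{\pi_\theta}}(s)}$ and $\pi^\star(s)\in\arg\max_a(r(s,a)-\gamma\sigma(P_{s,a},V^\star))$ (viewed as a deterministic policy).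
   Context: $\mathcal S$ and $\mathcal A$ are finite sets; $\Delta(\mathcal X)$ denotes the probability simplex over a finite set $\mathcal X$. $P=\{P_{s,a}\}$ with $P_{s,a}\in\Delta(\mathcal S)$ is the nominal transition kernel, $r:\mathcal S\times\mathcal A\to[0,1]$, $\gamma\in[0,1)$, $\rho\in\Delta(\mathcal S)$. A stationary policy is a map $\pi:\mathcal S\to\Delta(\mathcal A)$. A function $\sigma:\mathbb R^{\mathcal S}\to\mathbb R$ is a convex risk measure if (i) $V'\le V$ pointwise implies $\sigma(V)\le\sigma(V')$; (ii) $\sigma(V+m)=\sigma(V)-m$ for every constant $m$; (iii) $\sigma$ is convex. For each $(s,a)$ a convex risk measure $\sigma(P_{s,a},\cdot)$ is given, with penalty $D(\hat\mu,P_{s,a}):=\sup_{V}\big(-\sigma(P_{s,a},V)-\mathbb E_{s'\sim\hat\mu}V(s')\big)$. For a policy $\pi$, $V^\pi$ is the unique solution of $V^\pi(s)=\sum_a\pi(a|s)(r(s,a)-\gamma\sigma(P_{s,a},V^\pi))$, $Q^\pi(s,a):=r(s,a)-\gamma\sigma(P_{s,a},V^\pi)$; $V^\star$ is the unique solution of $V^\star(s)=\max_a(r(s,a)-\gamma\sigma(P_{s,a},V^\star))$. $\hat P^\pi_{s,a}\in\arg\min_{\hat\mu\in\Delta(\mathcal S)}\big(D(\hat\mu,P_{s,a})+\mathbb E_{s'\sim\hat\mu}V^\pi(s')\big)$. For a policy $\pi$ and stationary kernel $K$, $d^{\pi,K}(s):=(1-\gamma)\sum_{t\ge0}\gamma^t\Pr(s_t=s)$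 with $s_0\sim\rho$, $a_t\sim\pi(\cdot|s_t)$, $s_{t+1}\sim K_{s_t,a_t}$. The inner product is $\langle x,y\rangle=\sum_{s,a}x_{s,a}y_{s,a}$. *)

From HB Require Import structures.
From mathcomp Require Import all_boot all_order all_algebra.
From mathcomp Require Import all_classical all_reals all_analysis.
Set Implicit Arguments. Unset Strict Implicit. Unset Printing Implicit Defensive.
Import Order.TTheory GRing.Theory Num.Theory.
Local Open Scope ring_scope.
Local Open Scope classical_set_scope.

Section RMDP.
Variables (R : realType) (S A : finType).

Definition is_dist (T : finType) (mu : T -> R) : Prop :=
  (forall x, 0 <= mu x) /\ \sum_(x : T) mu x = 1.

Definition is_policy (pi : S -> A -> R) : Prop := forall s, is_dist (pi s).

Definition convex_risk_measure (sig : (S -> R) -> R) : Prop :=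
  [/\ (forall V V' : S -> R, (forall s, V' s <= V s) -> sig V <= sig V'),
      (forall (V : S -> R) (m : R), sig (fun s => V s + m) = sig V - m)
    & (forall (V V' : S -> R) (l : R), 0 <= l <= 1 ->
         sig (fun s => l * V s + (1 - l) * V' s) <= l * sig V + (1 - l) * sig V')].

Definition expect (mu : S -> R) (V : S -> R) : R := \sum_(s : S) mu s * V s.

Definition penalty (sig : (S -> R) -> R) (mu : S -> R) : \bar R :=
  ereal_sup [set ((- sig V - expect mu V)%:E) | V in [set: S -> R]].

Definition is_robust_value (sigma : S -> A -> (S -> R) -> R) (r : S -> A -> R)
  (gamma : R) (pi : S -> A -> R) (V : S -> R) : Prop :=
  forall s, V s = \sum_(a : A) pi s a * (r s a - gamma * sigma s a V).

Definition is_robust_optimal_value (sigma : S -> A -> (S -> R) -> R)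
  (r : S -> A -> R) (gamma : R) (V : S -> R) : Prop :=
  forall s, exists2 a, (forall a', r s a' - gamma * sigma s a' V <= r s a - gamma * sigma s a V)
    & V s = r s a - gamma * sigma s a V.

Definition is_worst_kernel (sigma : S -> A -> (S -> R) -> R) (V : S -> R)
  (Phat : S -> A -> S -> R) : Prop :=
  forall s a, is_dist (Phat s a) /\
    forall mu, is_dist mu ->
      (penalty (sigma s a) (Phat s a) + (expect (Phat s a) V)%:E
        <= penalty (sigma s a) mu + (expect mu V)%:E)%E.

Fixpoint state_dist (rho : S -> R) (pi : S -> A -> R) (K : S -> A -> S -> R)
  (t : nat) : S -> R :=
  match t with
  | 0%N => rho
  | t'.+1 => fun s' => \sum_(s : S) state_dist rho pi K t' s *
                        \sum_(a : A) pi s a * K s a s'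
  end.

Definition occupancy (gamma : R) (rho : S -> R) (pi : S -> A -> R)
  (K : S -> A -> S -> R) (s : S) : R :=
  (1 - gamma) * limn (fun n => \sum_(0 <= t < n) gamma ^+ t * state_dist rho pi K t s).

Definition det_policy (f : S -> A) : S -> A -> R :=
  fun s a => if a == f s then 1 else 0.

Definition inner (x y : S -> A -> R) : R := \sum_(s : S) \sum_(a : A) x s a * y s a.

End RMDP.

(* Since the worst-case kernel Phat minimises the dual representation of each
   sigma(P_{s,a}, .) at V^theta, we get
   sigma(P_{s,a}, V^theta) - sigma(P_{s,a}, V^star) <= E_{Phat_{s,a}} (V^star - V^theta),
   so V^star - V^theta is a subsolution of the Bellman equation of pi^star under
   the fixed kernel Phat, with reward the advantage Q^theta(s, pi^star s) - V^theta(s).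
   Unrolling it bounds E_rho (V^star - V^theta) by (1 - gamma)^-1 times the
   d^{pi^star,Phat}-average of the greedy advantage max_a Q^theta(s,a) - V^theta(s);
   changing to d^{theta,Phat} costs the ratio factor, and the greedy policy
   attains the resulting weighted sum in the linear objective <pi - theta, G>.
   The dual minimiser at V is minus a subgradient of the convex function sigma,
   which is built one coordinate at a time. *)

From HB Require Import structures.
From mathcomp Require Import all_boot all_order all_algebra.
From mathcomp Require Import all_classical all_reals all_analysis.
From mathcomp Require Import ring lra.
Import Order.TTheory GRing.Theory Num.Theory numFieldNormedType.Exports.
Local Open Scope ring_scope.
Local Open Scope classical_set_scope.
Set Implicit Arguments. Unset Strict Implicit. Unset Printing Implicit Defensive.

Section ConvexSubgradient.
Variables (R : realType) (S : finType) (f : (S -> R) -> R) (x : S -> R).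
Hypothesis f_convex : forall (V V' : S -> R) (l : R), 0 <= l <= 1 ->
  f (fun s => l * V s + (1 - l) * V' s) <= l * f V + (1 - l) * f V'.

Definition supported_on (l : seq S) (h : S -> R) := forall s, s \notin l -> h s = 0.

Definition excess (g h : S -> R) : R :=
  f (fun s => x s + h s) - f x - \sum_s g s * h s.

Definition subgradient_on (l : seq S) (g : S -> R) :=
  forall h, supported_on l h -> 0 <= excess g h.

Definition perturb (h : S -> R) (e : S) (t : R) : S -> R :=
  fun s => h s + t * (s == e)%:R.

Lemma sum_mul_delta (g : S -> R) (e : S) : \sum_s g s * (s == e)%:R = g e.
Proof.
rewrite (bigD1 e) //= eqxx mulr1 big1 ?addr0 // => s /negbTE ->.
by rewrite mulr0.
Qed.

Lemma excess_perturb_gradient (g h : S -> R) (e : S) (c : R) :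
  excess (perturb g e c) h = excess g h - c * h e.
Proof.
rewrite /excess /perturb.
under eq_bigr do rewrite mulrDl.
rewrite big_split /=.
have -> : \sum_s c * (s == e)%:R * h s = c * h e.
  by rewrite -(sum_mul_delta h e) mulr_sumr; apply: eq_bigr => s _; ring.
ring.
Qed.

Lemma excess_convex (g h h' : S -> R) (l : R) : 0 <= l <= 1 ->
  excess g (fun s => l * h s + (1 - l) * h' s)
  <= l * excess g h + (1 - l) * excess g h'.
Proof.
move=> l01; have := f_convex (fun s => x s + h s) (fun s => x s + h' s) l01.
have -> : (fun s => l * (x s + h s) + (1 - l) * (x s + h' s))
        = (fun s => x s + (l * h s + (1 - l) * h' s)).
  by apply/funext => s; ring.
rewrite /excess.
have -> : \sum_s g s * (l * h s + (1 - l) * h' s)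
        = l * \sum_s g s * h s + (1 - l) * \sum_s g s * h' s.
  by rewrite !mulr_sumr -big_split /=; apply: eq_bigr => s _; ring.
lra.
Qed.

Section ExtendCoordinate.
Variables (l : seq S) (g : S -> R) (e : S).
Hypothesis g_sub : subgradient_on l g.

(* [h1 + t1 e] and [h2 - t2 e] average, with weights [t2] and [t1], to a
   direction supported on [l], where the excess is nonnegative. *)
Lemma backward_slope_le_forward_slope (h1 h2 : S -> R) (t1 t2 : R) :
  supported_on l h1 -> supported_on l h2 -> 0 < t1 -> 0 < t2 ->
  - excess g (perturb h2 e (- t2)) / t2 <= excess g (perturb h1 e t1) / t1.
Proof.
move=> h1l h2l t1p t2p.
have tp : 0 < t1 + t2 by rewrite addr_gt0.
pose lam := t2 / (t1 + t2).
have lam01 : 0 <= lam <= 1.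
  apply/andP; split; first by rewrite divr_ge0 // ltW.
  by rewrite ler_pdivrMr // mul1r lerDr ltW.
set E1 := excess g (perturb h1 e t1); set E2 := excess g (perturb h2 e (- t2)).
have := excess_convex g (perturb h1 e t1) (perturb h2 e (- t2)) lam01.
have -> : (fun s => lam * perturb h1 e t1 s + (1 - lam) * perturb h2 e (- t2) s)
        = (fun s => (t2 * h1 s + t1 * h2 s) / (t1 + t2)).
  apply/funext => s; rewrite /perturb /lam; field; exact: lt0r_neq0.
have avg_l : supported_on l (fun s => (t2 * h1 s + t1 * h2 s) / (t1 + t2)).
  by move=> s sl; rewrite h1l // h2l // !mulr0 addr0 mul0r.
move/(le_trans (g_sub avg_l)); rewrite -/E1 -/E2 => avg_ge0.
have : 0 <= t2 * E1 + t1 * E2.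
  have -> : t2 * E1 + t1 * E2 = (t1 + t2) * (lam * E1 + (1 - lam) * E2).
    by rewrite /lam; field; exact: lt0r_neq0.
  by rewrite mulr_ge0 // ltW.
rewrite ler_pdivrMr // mulrAC ler_pdivlMr //; nra.
Qed.

(* The new coordinate is any value between the backward slopes and the
   forward slopes along [e], e.g. the supremum of the former. *)
Lemma subgradient_on_cons : exists c, subgradient_on (e :: l) (perturb g e c).
Proof.
pose L := [set y : R | exists h t,
  [/\ supported_on l h, 0 < t & y = - excess g (perturb h e (- t)) / t]].
have zero_l : supported_on l (fun _ => 0) by [].
have L_sup : has_sup L.
  split; first by eexists; exists (fun _ => 0), 1.
  exists (excess g (perturb (fun _ => 0) e 1) / 1).
  by move=> _ [h [t [hl tp ->]]]; exact: backward_slope_le_forward_slope.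
exists (sup L) => h hel.
pose h0 s := if s == e then 0 else h s.
have h0l : supported_on l h0.
  move=> s sl; rewrite /h0; case: eqP => // /eqP se.
  by apply: hel; rewrite inE negb_or se.
have -> : h = perturb h0 e (h e).
  apply/funext => s; rewrite /perturb /h0.
  by case: eqP => [->|_]; rewrite ?mulr1 ?add0r ?mulr0 ?addr0.
rewrite excess_perturb_gradient {2}/perturb /h0 eqxx add0r mulr1.
have [he_lt0|he_gt0|->] := ltgtP (h e) 0.
- have : - excess g (perturb h0 e (- - h e)) / - h e <= sup L.
    by apply: sup_upper_bound => //; exists h0, (- h e); rewrite oppr_gt0.
  rewrite opprK ler_pdivrMr ?oppr_gt0 //; lra.
- have : sup L <= excess g (perturb h0 e (h e)) / h e.
    apply: ge_sup; first by case: L_sup.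
    by move=> _ [h' [t [h'l tp ->]]]; exact: backward_slope_le_forward_slope.
  rewrite ler_pdivlMr //; lra.
- have -> : perturb h0 e 0 = h0 by apply/funext => s; rewrite /perturb mul0r addr0.
  by rewrite mulr0 subr0; exact: g_sub.
Qed.

End ExtendCoordinate.

Lemma subgradient_on_seq (l : seq S) : exists g, subgradient_on l g.
Proof.
elim: l => [|e l [g g_sub]]; last first.
  by have [c] := subgradient_on_cons e g_sub; exists (perturb g e c).
exists (fun _ => 0) => h h0.
have -> : h = (fun _ => 0) by apply/funext => s; exact: h0.
rewrite /excess big1 => [|s _]; last by rewrite mulr0.
by under eq_fun do rewrite addr0; rewrite !subrr.
Qed.

Theorem convex_subgradient :
  exists g : S -> R, forall W, f x + \sum_s g s * (W s - x s) <= f W.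
Proof.
have [g g_sub] := subgradient_on_seq (enum S).
exists g => W.
have : 0 <= excess g (fun s => W s - x s) by apply: g_sub => s; rewrite mem_enum.
rewrite /excess.
have -> : (fun s => x s + (W s - x s)) = W by apply/funext => s; rewrite addrC subrK.
lra.
Qed.

End ConvexSubgradient.

Section RiskMeasureDuality.
Variables (R : realType) (S : finType) (sig : (S -> R) -> R).
Hypothesis sig_crm : convex_risk_measure sig.

Lemma risk_measure_dual_attained (V : S -> R) :
  exists2 mu, is_dist mu & (penalty sig mu + (expect mu V)%:E <= (- sig V)%:E)%E.
Proof.
case: sig_crm => mono cash conv.
have [g g_sub] := convex_subgradient V conv.
have g_le0 s : g s <= 0.
  have := g_sub (fun s' => V s' + (s' == s)%:R).
  under eq_bigr do rewrite addrC addKr.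
  have : sig (fun s' => V s' + (s' == s)%:R) <= sig V.
    by apply: mono => s'; rewrite lerDl ler0n.
  rewrite sum_mul_delta; lra.
have g_sum : \sum_s g s = -1.
  have shift_le m : sig V + (\sum_s g s) * m <= sig V - m.
    have := g_sub (fun s => V s + m); rewrite cash.
    by under eq_bigr do rewrite addrC addKr; rewrite -mulr_suml.
  by move: (shift_le 1) (shift_le (-1)); lra.
pose mu s := - g s.
exists mu.
  by split => [s|]; rewrite ?oppr_ge0 ?g_le0 // sumrN g_sum opprK.
have pen_le : (penalty sig mu <= (- sig V - expect mu V)%:E)%E.
  apply: ge_ereal_sup => _ [W _ <-]; rewrite lee_fin.
  have := g_sub W.
  have -> : \sum_s g s * (W s - V s) = expect mu V - expect mu W.
    by rewrite /expect -sumrB; apply: eq_bigr => s _; rewrite /mu; ring.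
  lra.
by have := leeD2r (expect mu V)%:E pen_le; rewrite -EFinD subrK.
Qed.

Lemma risk_measure_sub_le_argmin (P V W : S -> R) :
  (forall mu, is_dist mu -> (penalty sig P + (expect P V)%:E
                             <= penalty sig mu + (expect mu V)%:E)%E) ->
  sig V - sig W <= expect P (fun s => W s - V s).
Proof.
move=> P_min.
have [mu mu_dist mu_le] := risk_measure_dual_attained V.
have P_le := le_trans (P_min mu mu_dist) mu_le.
have W_le : ((- sig W - expect P W)%:E <= penalty sig P)%E.
  by apply: ereal_sup_ubound; exists W.
have := le_trans (leeD2r (expect P V)%:E W_le) P_le.
rewrite -EFinD lee_fin.
have -> : expect P (fun s => W s - V s) = expect P W - expect P V.
  by rewrite /expect -sumrB; apply: eq_bigr => s _; ring.
lra.
Qed.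

End RiskMeasureDuality.

Section Occupancy.
Variables (R : realType) (S A : finType) (gamma : R) (rho : S -> R)
  (pi : S -> A -> R) (K : S -> A -> S -> R).
Hypotheses (gamma01 : 0 <= gamma < 1) (rho_dist : is_dist rho)
  (pi_policy : is_policy pi) (K_dist : forall s a, is_dist (K s a)).

Local Notation sd := (state_dist rho pi K).

Lemma state_dist_ge0 t s : 0 <= sd t s.
Proof.
elim: t s => [|t IH] s /=; first by case: rho_dist.
apply: sumr_ge0 => s0 _; apply: mulr_ge0 => //.
apply: sumr_ge0 => a _.
by apply: mulr_ge0; [case: (pi_policy s0) | case: (K_dist s0 a)].
Qed.

Lemma state_dist_sum t : \sum_s sd t s = 1.
Proof.
elim: t => [|t IH] /=; first by case: rho_dist.
rewrite exchange_big /= -[RHS]IH; apply: eq_bigr => s _.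
rewrite -mulr_sumr exchange_big /=.
have -> : \sum_a \sum_s' pi s a * K s a s' = 1.
  case: (pi_policy s) => _ <-; apply: eq_bigr => a _.
  by rewrite -mulr_sumr; case: (K_dist s a) => _ ->; rewrite mulr1.
by rewrite mulr1.
Qed.

Lemma state_dist_le1 t s : sd t s <= 1.
Proof.
rewrite -(state_dist_sum t) (bigD1 s) //= lerDl.
by apply: sumr_ge0 => *; exact: state_dist_ge0.
Qed.

Definition discounted_visits (s : S) (n : nat) : R :=
  \sum_(0 <= t < n) gamma ^+ t * sd t s.

Lemma discounted_visits_cvg s : cvgn (discounted_visits s).
Proof.
have [gamma_ge0 gamma_lt1] := andP gamma01.
have gamma1_gt0 : 0 < 1 - gamma by rewrite subr_gt0.
apply: nondecreasing_is_cvgn.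
  apply/nondecreasing_seqP => n; rewrite /discounted_visits big_nat_recr //= lerDl.
  by rewrite mulr_ge0 ?exprn_ge0 ?state_dist_ge0.
exists (1 - gamma)^-1 => _ [n _ <-].
rewrite -[_^-1]mul1r ler_pdivlMr //.
have geom_sum : \sum_(0 <= t < n) gamma ^+ t * (1 - gamma) = 1 - gamma ^+ n.
  elim: n => [|n IH]; first by rewrite big_geq // expr0 subrr.
  by rewrite big_nat_recr //= IH exprS; ring.
apply: (@le_trans _ _ (\sum_(0 <= t < n) gamma ^+ t * (1 - gamma))).
  rewrite /discounted_visits mulr_suml; apply: ler_sum => t _.
  apply: ler_wpM2r; first exact: ltW.
  by apply: ler_piMr; [exact: exprn_ge0 | exact: state_dist_le1].
by rewrite geom_sum gerDl oppr_le0 exprn_ge0.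
Qed.

Lemma occupancyE s :
  occupancy gamma rho pi K s = (1 - gamma) * limn (discounted_visits s).
Proof. by []. Qed.

Lemma occupancy_ge0 s : 0 <= occupancy gamma rho pi K s.
Proof.
have [gamma_ge0 gamma_lt1] := andP gamma01.
rewrite occupancyE; apply: mulr_ge0; first by rewrite subr_ge0 ltW.
apply: limr_ge; first exact: discounted_visits_cvg.
near=> n; apply: sumr_ge0 => t _.
by rewrite mulr_ge0 ?exprn_ge0 ?state_dist_ge0.
Unshelve. all: by end_near.
Qed.

Variables (adv delta : S -> R).
Hypothesis delta_subsolution : forall s,
  delta s <= adv s + gamma * \sum_s' (\sum_a pi s a * K s a s') * delta s'.

Lemma subsolution_unroll n : \sum_s rho s * delta s <=
  \sum_s discounted_visits s n * adv s + gamma ^+ n * \sum_s sd n s * delta s.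
Proof.
have gamma_ge0 : 0 <= gamma by case/andP: gamma01.
elim: n => [|n IH].
  rewrite expr0 mul1r [X in X + _]big1 ?add0r // => s _.
  by rewrite /discounted_visits big_geq // mul0r.
apply: (le_trans IH).
have visitsS s : discounted_visits s n.+1 * adv s
    = discounted_visits s n * adv s + gamma ^+ n * (sd n s * adv s).
  by rewrite /discounted_visits big_nat_recr //= mulrDl mulrA.
under [X in _ <= X + _]eq_bigr do rewrite visitsS.
rewrite big_split /= -mulr_sumr -addrA lerD2l exprSr -mulrA -mulrDr.
rewrite ler_wpM2l ?exprn_ge0 //.
have -> : \sum_s sd n.+1 s * delta s
    = \sum_s sd n s * \sum_s' (\sum_a pi s a * K s a s') * delta s'.
  rewrite /=; under eq_bigr do rewrite mulr_suml.
  rewrite exchange_big /=; apply: eq_bigr => s _; rewrite mulr_sumr.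
  by apply: eq_bigr => s' _; rewrite mulrA.
rewrite mulr_sumr -big_split /=; apply: ler_sum => s _.
by rewrite mulrCA -mulrDr ler_wpM2l ?state_dist_ge0.
Qed.

Lemma subsolution_le_occupancy :
  \sum_s rho s * delta s
  <= (1 - gamma)^-1 * \sum_s occupancy gamma rho pi K s * adv s.
Proof.
have [gamma_ge0 gamma_lt1] := andP gamma01.
have -> : (1 - gamma)^-1 * \sum_s occupancy gamma rho pi K s * adv s
        = \sum_s limn (discounted_visits s) * adv s.
  rewrite mulr_sumr; apply: eq_bigr => s _; rewrite occupancyE.
  by field; rewrite subr_eq0 eq_sym lt_eqF.
have visits_cvg : \sum_s discounted_visits s n * adv s @[n --> \oo]
                   --> \sum_s limn (discounted_visits s) * adv s.
  apply: cvg_big; first exact: add_continuous.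
  by move=> s _; apply: cvgMr_tmp; exact: discounted_visits_cvg.
have tail_cvg : gamma ^+ n * \sum_s `|delta s| @[n --> \oo] --> 0.
  rewrite -[X in _ --> X](mul0r (\sum_s `|delta s|)); apply: cvgMr_tmp.
  by apply: cvg_expr; rewrite ger0_norm.
have u_cvg : \sum_s discounted_visits s n * adv s
             + gamma ^+ n * \sum_s `|delta s| @[n --> \oo]
             --> \sum_s limn (discounted_visits s) * adv s + 0 by exact: cvgD.
rewrite -[X in _ <= X]addr0 -(cvg_lim _ u_cvg) //.
apply: limr_ge; first by apply/cvg_ex; eexists; exact: u_cvg.
apply: nearW => n; apply: (le_trans (subsolution_unroll n)); rewrite lerD2l.
rewrite ler_wpM2l ?exprn_ge0 //; apply: ler_sum => s _.
rewrite (le_trans (ler_norm _)) // normrM ger0_norm ?state_dist_ge0 //.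
by rewrite ler_piMl ?state_dist_le1.
Qed.

End Occupancy.

Section Policies.
Variables (R : realType) (S A : finType).

Lemma det_policy_sum (f : S -> A) (s : S) (X : A -> R) :
  \sum_a det_policy R f s a * X a = X (f s).
Proof.
rewrite (bigD1 (f s)) //= /det_policy eqxx mul1r big1 ?addr0 // => a /negbTE ->.
by rewrite mul0r.
Qed.

Lemma det_policy_is_policy (f : S -> A) : is_policy (det_policy R f).
Proof.
move=> s; split=> [a|]; first by rewrite /det_policy; case: eqP.
by have := det_policy_sum f s (fun _ => 1); under eq_bigr do rewrite mulr1.
Qed.

Lemma dist_avg_le (T : finType) (p F : T -> R) (m : R) :
  is_dist p -> (forall x, F x <= m) -> \sum_x p x * F x <= m.
Proof.
move=> [p_ge0 p_sum] F_le; apply: (@le_trans _ _ (\sum_x p x * m)).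
  by apply: ler_sum => x _; rewrite ler_wpM2l.
by rewrite -mulr_suml p_sum mul1r.
Qed.

Lemma exists_greedy (Q : S -> A -> R) (f : S -> A) :
  exists g : S -> A, forall s a, Q s a <= Q s (g s).
Proof.
exists (fun s => Order.arg_max (f s) xpredT (Q s)) => s a.
by case: (@arg_maxP _ R A (f s) xpredT (Q s) isT) => b _; apply.
Qed.

Lemma greedy_gap_le_sup (w : S -> R) (Q : S -> A -> R) (theta : S -> A -> R)
    (g : S -> A) :
  (forall s, 0 <= w s) -> is_policy theta -> (forall s a, Q s a <= Q s (g s)) ->
  \sum_s w s * (Q s (g s) - \sum_a theta s a * Q s a)
  <= sup [set inner (fun s a => pib s a - theta s a) (fun s a => w s * Q s a)
         | pib in @is_policy R S A].
Proof.
move=> w_ge0 theta_policy g_max.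
have innerE pib : inner (fun s a => pib s a - theta s a) (fun s a => w s * Q s a)
    = \sum_s w s * (\sum_a pib s a * Q s a - \sum_a theta s a * Q s a).
  apply: eq_bigr => s _; rewrite -sumrB mulr_sumr.
  by apply: eq_bigr => a _; ring.
apply: sup_upper_bound.
  split; first by eexists; exists (det_policy R g); first exact: det_policy_is_policy.
  exists (\sum_s w s * (Q s (g s) - \sum_a theta s a * Q s a)).
  move=> _ [pib pib_policy <-]; rewrite innerE.
  by apply: ler_sum => s _; rewrite ler_wpM2l // lerD2r dist_avg_le.
exists (det_policy R g); first exact: det_policy_is_policy.
by rewrite innerE; apply: eq_bigr => s _; rewrite det_policy_sum.
Qed.

End Policies.

Lemma sum_le_max_ratio (R : realType) (S : finType) (p q b : S -> R) :
  (forall s, 0 < q s) -> (forall s, 0 <= b s) ->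
  \sum_s p s * b s <= (\big[Num.max/0]_s (p s / q s)) * \sum_s q s * b s.
Proof.
move=> q_gt0 b_ge0; rewrite mulr_sumr; apply: ler_sum => s _.
have -> : p s * b s = p s / q s * (q s * b s).
  by field; exact: lt0r_neq0.
apply: ler_wpM2r; first by rewrite mulr_ge0 // ltW.
exact: le_bigmax.
Qed.

Lemma robust_optimal_gap_step (R : realType) (S A : finType)
    (sigma : S -> A -> (S -> R) -> R) (r : S -> A -> R) (gamma : R)
    (Vtheta Vstar : S -> R) (Phat : S -> A -> S -> R) (pistar : S -> A) :
  (forall s a, convex_risk_measure (sigma s a)) -> 0 <= gamma ->
  is_robust_optimal_value sigma r gamma Vstar ->
  is_worst_kernel sigma Vtheta Phat ->
  (forall s a, r s a - gamma * sigma s a Vstar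
               <= r s (pistar s) - gamma * sigma s (pistar s) Vstar) ->
  forall s, Vstar s - Vtheta s
    <= (r s (pistar s) - gamma * sigma s (pistar s) Vtheta - Vtheta s)
       + gamma * \sum_s' (\sum_a det_policy R pistar s a * Phat s a s')
                 * (Vstar s' - Vtheta s').
Proof.
move=> crm gamma_ge0 Vstar_opt Phat_worst pistar_greedy s.
under eq_bigr do rewrite det_policy_sum.
have Vstar_le : Vstar s <= r s (pistar s) - gamma * sigma s (pistar s) Vstar.
  by have [a _ ->] := Vstar_opt s; exact: pistar_greedy.
have := risk_measure_sub_le_argmin (crm s (pistar s)) Vstar
  (Phat_worst s (pistar s)).2.
move/(ler_wpM2l gamma_ge0); rewrite mulrBr /expect; lra.
Qed.

Theorem mainTheorem8 (R : realType) (S A : finType)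
  (sigma : S -> A -> (S -> R) -> R) (r : S -> A -> R) (gamma : R) (rho : S -> R)
  (theta : S -> A -> R) (Vtheta Vstar : S -> R) (Phat : S -> A -> S -> R)
  (pistar : S -> A) :
  (forall s a, convex_risk_measure (sigma s a)) ->
  (forall s a, 0 <= r s a <= 1) ->
  0 <= gamma < 1 ->
  is_dist rho ->
  is_policy theta ->
  is_robust_value sigma r gamma theta Vtheta ->
  is_robust_optimal_value sigma r gamma Vstar ->
  is_worst_kernel sigma Vtheta Phat ->
  (forall s a, r s a - gamma * sigma s a Vstar
               <= r s (pistar s) - gamma * sigma s (pistar s) Vstar) ->
  (forall s, 0 < occupancy gamma rho theta Phat s) ->
  let G := fun s a => (1 - gamma)^-1 * occupancy gamma rho theta Phat s *
                      (r s a - gamma * sigma s a Vtheta) in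
  \sum_(s : S) rho s * (Vstar s - Vtheta s)
  <= (\big[Num.max/0]_(s : S)
        (occupancy gamma rho (@det_policy R S A pistar) Phat s
         / occupancy gamma rho theta Phat s))
     * sup [set inner (fun s a => pib s a - theta s a) G | pib in @is_policy R S A].
Proof.
(* The bounds on [r] only serve to make the value functions exist; here they
   are given. *)
move=> crm _ gamma01 rho_dist theta_policy Vtheta_eq Vstar_opt Phat_worst
  pistar_greedy dtheta_gt0 /=.
have [gamma_ge0 gamma_lt1] := andP gamma01.
have inv_ge0 : 0 <= (1 - gamma)^-1 by rewrite invr_ge0 subr_ge0 ltW.
have Phat_dist s a : is_dist (Phat s a) by case: (Phat_worst s a).
pose Q s a := r s a - gamma * sigma s a Vtheta.
have [g g_max] := exists_greedy Q pistar.
pose gap s := Q s (g s) - Vtheta s.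
have gap_ge0 s : 0 <= gap s.
  by rewrite subr_ge0 Vtheta_eq; apply: dist_avg_le => //; exact: g_max.
have pistar_policy := det_policy_is_policy R pistar.
apply: (le_trans (subsolution_le_occupancy gamma01 rho_dist pistar_policy Phat_dist
  (robust_optimal_gap_step crm gamma_ge0 Vstar_opt Phat_worst pistar_greedy))).
apply: (@le_trans _ _ ((1 - gamma)^-1 *
   \sum_s occupancy gamma rho (det_policy R pistar) Phat s * gap s)).
  apply: ler_wpM2l => //; apply: ler_sum => s _.
  apply: ler_wpM2l; first exact: (occupancy_ge0 gamma01 rho_dist pistar_policy).
  by rewrite /gap lerD2r; exact: g_max.
apply: (le_trans (ler_wpM2l inv_ge0 (sum_le_max_ratio _ dtheta_gt0 gap_ge0))).
rewrite mulrCA; apply: ler_wpM2l; first exact: bigmax_ge_id.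
have w_ge0 s : 0 <= (1 - gamma)^-1 * occupancy gamma rho theta Phat s.
  exact: mulr_ge0 inv_ge0 (ltW (dtheta_gt0 s)).
apply: le_trans (greedy_gap_le_sup w_ge0 theta_policy g_max).
by rewrite mulr_sumr; apply: ler_sum => s _; rewrite /gap Vtheta_eq mulrA.
Qed.
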